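(* Let $\ell$ be a prime, $\nu\ge 1$, and $R$ a $\mathbb{Z}/\ell^\nu$-algebra. Let $L$ be the free $R$-module on symbols $\alpha_1,\dots,\alpha_{\ell-1}$, and for $k\ge0$ let $\phi_k:L\to H_R$ be the $R$-linear map with $\phi_k(\alpha_i)=\alpha_{k\ell+i}$. Then $\bigoplus_k\phi_k:\bigoplus_{k=0}^\infty L\to H_R$ is an isomorphism of $R$-modules. In particular, the elements $\alpha_n$ with $n>0$ and $n\not\equiv0\pmod\ell$ form an $R$-basis of $H_R$.
   Context: $F\subseteq\mathbb{Q}[t]$ is the ring of numerical polynomials (those $f$ with $f(n)\in\mathbb{Z}$ for all integers $n\gg0$), free abelian on $\alpha_n=\binom tn$, $n\ge0$. $F_R=R\otimes F$ is the free $R$-module on the $\alpha_n$, and $T:F_R\to F_R$ (multiplication by $t$) is given by $T(\alpha_n)=n\alpha_n+(n+1)\alpha_{n+1}$. $H_R$ denotes the colimit of $F_R\xrightarrow{T}F_R\xrightarrow{T}F_R\to\cdots$, i.e. $H_R=F_R[1/t]=R\otimes H$ with $H=F[1/t]$; $\alpha_n$ also denotes the image in $H_R$ of the basis element $\alpha_n$ of the first copy of $F_R$. *)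

From HB Require Import structures.
From mathcomp Require Import all_boot all_order all_algebra.
Set Implicit Arguments. Unset Strict Implicit. Unset Printing Implicit Defensive.
Import Order.TTheory GRing.Theory Num.Theory.
Local Open Scope ring_scope.

(* F_R, the free R-module on the basis alpha_n = binom(t,n) (n : nat), is
   modelled by the R-module {poly R} used ONLY as a free R-module with basis
   indexed by nat: the element sum_n x_n alpha_n is the polynomial whose n-th
   coefficient is x_n.  The ring structure of {poly R} is never used. *)
Definition alpha (R : nzRingType) (n : nat) : {poly R} := 'X^n.

(* T : F_R -> F_R, multiplication by t:  T(alpha_n) = n alpha_n + (n+1) alpha_(n+1),
   extended R-linearly. *)
Definition Tmap (R : nzRingType) (x : {poly R}) : {poly R} :=
  \sum_(n < size x) x`_n *: (alpha R n *+ n + alpha R n.+1 *+ n.+1).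

(* H_R = colim (F_R --T--> F_R --T--> ...).  An element of H_R is represented
   by a pair (m, x): x in the m-th copy of F_R. *)
Definition Hrep (R : nzRingType) := (nat * {poly R})%type.

Definition Hequiv (R : nzRingType) (a b : Hrep R) : Prop :=
  exists k : nat, [/\ (a.1 <= k)%N, (b.1 <= k)%N &
    iter (k - a.1) (@Tmap R) a.2 = iter (k - b.1) (@Tmap R) b.2].

Definition Hadd (R : nzRingType) (a b : Hrep R) : Hrep R :=
  let k := maxn a.1 b.1 in
  (k, iter (k - a.1) (@Tmap R) a.2 + iter (k - b.1) (@Tmap R) b.2).

Definition Hscale (R : nzRingType) (r : R) (a : Hrep R) : Hrep R := (a.1, r *: a.2).

(* Image in H_R of an element x of the first copy of F_R; in particular
   Hincl (alpha R n) is the element alpha_n of H_R. *)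
Definition Hincl (R : nzRingType) (x : {poly R}) : Hrep R := (0%N, x).

(* L = free R-module on alpha_1, ..., alpha_(l-1): row vectors 'rV[R]_(l.-1),
   coordinate j : 'I_(l.-1) being the coefficient of alpha_(j+1).
   (+)_{k>=0} L : finite sequences d of elements of L, d`_k being the k-th
   component (components beyond size d are 0). *)
Definition DL (R : nzRingType) (l : nat) := seq 'rV[R]_(l.-1).

Definition DL_eq (R : nzRingType) (l : nat) (d d' : DL R l) : Prop :=
  forall k, d`_k = d'`_k.

Definition DL_add (R : nzRingType) (l : nat) (d d' : DL R l) : DL R l :=
  mkseq (fun k => d`_k + d'`_k) (maxn (size d) (size d')).

Definition DL_scale (R : nzRingType) (l : nat) (r : R) (d : DL R l) : DL R l :=
  map (fun v => r *: v) d.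

Definition phi (R : nzRingType) (l k : nat) (v : 'rV[R]_(l.-1)) : Hrep R :=
  Hincl (\sum_(j < l.-1) v 0 j *: alpha R (k * l + j.+1)).

Definition phi_sum (R : nzRingType) (l : nat) (d : DL R l) : Hrep R :=
  Hincl (\sum_(k < size d) \sum_(j < l.-1) (d`_k) 0 j *: alpha R (k * l + j.+1)).

From HB Require Import structures.
From mathcomp Require Import all_boot all_order all_algebra.
From mathcomp Require Import cyclic.
Import GRing.Theory.
Set Implicit Arguments. Unset Strict Implicit. Unset Printing Implicit Defensive.
Local Open Scope ring_scope.

(* Evaluate x = sum_i x_i alpha_i at the integers, n |-> sum_i x_i 'C(n, i)
   in R.  This is injective (the binomial basis is unitriangular) and turns
   multiplication by t into multiplication by n.  As l^nu = 0 in R, t^k is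
   invertible at every n prime to l, while t^nu vanishes at every multiple of
   l.  Hence two elements of F_R whose coefficients vanish at the multiples of
   l agree in H_R iff their values agree at all n prime to l, iff they are
   equal.  Conversely every element of H_R has such a representative: the
   coefficients at multiples p of l are cleared one by one with
   (1 - t^e) alpha_p, where e = nu phi(l^nu) makes n^e = 1 mod l^nu for n prime
   to l and p^e = 0 mod l^nu.  Choosing a size bound b with b = 0 in R keeps
   the elimination finite, since t cannot then push a coefficient past b.
   The elements whose coefficients vanish at multiples of l are exactly the
   images of (+)_k L. *)

Lemma sumr_ord_shrink (V : nmodType) (F : nat -> V) m n :
  (m <= n)%N -> (forall i, (m <= i)%N -> F i = 0) ->
  \sum_(i < n) F i = \sum_(i < m) F i.
Proof.
move=> le_mn F0; rewrite (big_ord_widen n F le_mn) [RHS]big_mkcond /=.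
by apply: eq_bigr => i _; case: ltnP => // /F0 ->.
Qed.

Lemma bin_mul_addS n i : ('C(n, i) * i + 'C(n, i.+1) * i.+1 = 'C(n, i) * n)%N.
Proof.
rewrite [('C(n, i.+1) * _)%N]mulnC mul_bin_left.
case: (leqP i n) => [le_in|lt_ni]; last by rewrite bin_small // !(mul0n, muln0).
by rewrite [((n - i) * _)%N]mulnC -mulnDr subnKC.
Qed.

Section NumericalValue.
Variable R : nzRingType.
Implicit Types (x y : {poly R}) (n p : nat).

Definition nvalue n x : R := \sum_(i < n.+1) x`_i *+ 'C(n, i).

Lemma nvalue_is_zmod_morphism n : zmod_morphism (nvalue n).
Proof.
by move=> x y; rewrite /nvalue -sumrB; apply: eq_bigr => i _; rewrite coefB mulrnBl.
Qed.

HB.instance Definition _ n :=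
  GRing.isZmodMorphism.Build {poly R} R (nvalue n) (nvalue_is_zmod_morphism n).

Lemma nvalueZ n c x : nvalue n (c *: x) = c * nvalue n x.
Proof. by rewrite /nvalue mulr_sumr; apply: eq_bigr => i _; rewrite coefZ mulrnAr. Qed.

Lemma nvalueXn n p : nvalue n 'X^p = 'C(n, p)%:R.
Proof.
rewrite /nvalue (eq_bigr (fun i : 'I_n.+1 =>
  if (i == p :> nat) then 'C(n, p)%:R else 0)); last first.
  by move=> i _; rewrite coefXn; case: eqP => [->|_]; rewrite ?mul0rn.
rewrite -big_mkcond (big_ord1_eq _ (fun=> _)); case: ltnP => // lt_np.
by rewrite bin_small.
Qed.

Lemma nvalue_widen n K x :
  (size x <= K)%N -> \sum_(i < K) x`_i *+ 'C(n, i) = nvalue n x.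
Proof.
move=> le_xK; pose F i := x`_i *+ 'C(n, i).
transitivity (\sum_(i < K + n.+1) F i).
  symmetry; apply: (sumr_ord_shrink (F := F)) (leq_addr _ _) _ => i le_Ki.
  by rewrite /F nth_default ?mul0rn // (leq_trans le_xK).
apply: (sumr_ord_shrink (F := F)) (leq_addl _ _) _ => i lt_ni.
by rewrite /F bin_small ?mulr0n.
Qed.

Lemma nvalueT n x : nvalue n (Tmap x) = nvalue n x *+ n.
Proof.
rewrite /Tmap raddf_sum -(nvalue_widen n (leqnn (size x))) -sumrMnl.
apply: eq_bigr => i _ /=; rewrite nvalueZ raddfD !raddfMn /= /alpha !nvalueXn.
by rewrite -!mulrnA -mulrnDr bin_mul_addS mulr_natr mulrnA.
Qed.

Lemma nvalue_iterT n k x : nvalue n (iter k (@Tmap R) x) = nvalue n x *+ (n ^ k).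
Proof. by elim: k => [|k IH]; rewrite ?expn0 ?mulr1n //= nvalueT IH expnSr mulrnA. Qed.

Lemma nvalue_coef p x : (forall i, (i < p)%N -> x`_i = 0) -> nvalue p x = x`_p.
Proof.
move=> x0; rewrite /nvalue big_ord_recr /= binn mulr1n big1 ?add0r // => i _.
by rewrite x0 ?mul0rn.
Qed.

Lemma coef_eq0_below p x :
  (forall n, (n < p)%N -> x`_n = 0 \/ nvalue n x = 0) ->
  forall n, (n < p)%N -> x`_n = 0.
Proof.
elim: p => [//|p IH] x0 n; rewrite ltnS leq_eqVlt => /predU1P [->|]; last first.
  by apply: IH => i lt_ip; apply: x0; apply: ltnW.
have below : forall i, (i < p)%N -> x`_i = 0.
  by apply: IH => i lt_ip; apply: x0; apply: ltnW.
have [//|vp0] := x0 p (ltnSn p).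
by rewrite -(nvalue_coef below) vp0.
Qed.

Lemma nvalue_inj x y : (forall n, nvalue n x = nvalue n y) -> x = y.
Proof.
move=> xy; apply/polyP => i; apply/eqP; rewrite -subr_eq0 -coefB; apply/eqP.
by apply: (@coef_eq0_below i.+1) => // n _; right; rewrite raddfB /= xy subrr.
Qed.

Lemma size_Tmap_leq b x :
  b%:R = 0 :> R -> (size x <= b)%N -> (size (Tmap x) <= b)%N.
Proof.
move=> charb le_xb; apply/leq_sizeP => j le_bj.
rewrite /Tmap coef_sum big1 // => i _.
have lt_ib : (i < b)%N by apply: leq_trans le_xb.
rewrite coefZ coefD !coefMn !coefXn [j == i]eq_sym.
rewrite (ltn_eqF (leq_trans lt_ib le_bj)) mul0rn add0r.
case: eqP => [ji|_]; last by rewrite mul0rn mulr0.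
have -> : i.+1 = b by apply/eqP; rewrite eqn_leq lt_ib -ji.
by rewrite mulr1n charb mulr0.
Qed.

End NumericalValue.

Section CharacteristicDivisor.
Variables (R : nzRingType) (L : nat).
Hypothesis charL : L%:R = 0 :> R.

Lemma mulrn_modn (r : R) a b : a = b %[mod L] -> r *+ a = r *+ b.
Proof.
have mulrnL q : r *+ (q * L) = 0.
  by rewrite mulrnA -mulr_natr charL mulr0.
by move=> ab; rewrite (divn_eq a L) (divn_eq b L) !mulrnDr !mulrnL !add0r ab.
Qed.

Lemma mulrn_dvdn0 (r : R) a : (L %| a)%N -> r *+ a = 0.
Proof. by move=> /eqP aL0; rewrite (@mulrn_modn r a 0) ?mod0n. Qed.

Lemma mulrn_coprime_eq0 (r : R) a :
  (0 < L)%N -> coprime a L -> r *+ a = 0 -> r = 0.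
Proof.
move=> L_gt0 coprime_aL ra0.
have phi_gt0 : (0 < totient L)%N by rewrite totient_gt0.
rewrite -[r]mulr1n -(mulrn_modn r (Euler_exp_totient coprime_aL)).
by rewrite -(prednK phi_gt0) expnS mulrnA ra0 mul0rn.
Qed.

End CharacteristicDivisor.

Definition coprime_supported (R : nzRingType) (l : nat) (x : {poly R}) :=
  forall n, (l %| n)%N -> x`_n = 0.

Lemma coprime_supported_nvalue_inj (R : nzRingType) l (x y : {poly R}) :
  coprime_supported l x -> coprime_supported l y ->
  (forall n, ~~ (l %| n)%N -> nvalue n x = nvalue n y) -> x = y.
Proof.
move=> supp_x supp_y xy; apply/polyP => i; apply/eqP; rewrite -subr_eq0 -coefB.
apply/eqP/(@coef_eq0_below _ i.+1) => // n _.
have [ln|nln] := boolP (l %| n)%N; first by left; rewrite coefB supp_x ?supp_y ?subrr.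
by right; rewrite raddfB /= xy ?subrr.
Qed.

Section PrimePower.
Variables (l nu : nat).
Hypotheses (l_prime : prime l) (nu_gt0 : (0 < nu)%N).

Local Notation L := (l ^ nu)%N.
Local Notation e := (totient (l ^ nu) * nu)%N.

Lemma prime_power_gt0 : (0 < L)%N.
Proof. by rewrite expn_gt0 prime_gt0. Qed.

Lemma coprime_prime_power n : ~~ (l %| n)%N -> coprime n L.
Proof. by move=> nln; rewrite coprime_pexpr // coprime_sym prime_coprime. Qed.

Lemma expn_totientM_mod n : ~~ (l %| n)%N -> n ^ e = 1 %[mod L].
Proof.
move=> /coprime_prime_power coprime_nL.
by rewrite expnM -modnXm (Euler_exp_totient coprime_nL) modnXm exp1n.
Qed.

Lemma dvdn_expn_totientM n : (l %| n)%N -> (L %| n ^ e)%N.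
Proof.
move=> ln; apply: dvdn_trans (dvdn_exp2r nu ln) (dvdn_exp2l n _).
by rewrite leq_pmull // totient_gt0 prime_power_gt0.
Qed.

Variable R : nzRingType.
Hypothesis charL : L%:R = 0 :> R.
Implicit Types (x y : {poly R}) (n p : nat).

Lemma iterT_nvalue_coprime k x y : iter k (@Tmap R) x = iter k (@Tmap R) y ->
  forall n, ~~ (l %| n)%N -> nvalue n x = nvalue n y.
Proof.
move=> xy n nln; apply/eqP; rewrite -subr_eq0; apply/eqP.
apply: (mulrn_coprime_eq0 charL prime_power_gt0 (coprimeXl k (coprime_prime_power nln))).
by rewrite mulrnBl -!nvalue_iterT xy subrr.
Qed.

Lemma iterT_coprime_supported_inj k x y :
  coprime_supported l x -> coprime_supported l y ->
  iter k (@Tmap R) x = iter k (@Tmap R) y -> x = y.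
Proof.
move=> supp_x supp_y /iterT_nvalue_coprime xy.
exact: (coprime_supported_nvalue_inj supp_x supp_y xy).
Qed.

Definition killer p : {poly R} := 'X^p - iter e (@Tmap R) 'X^p.

Lemma nvalue_killer n p : nvalue n (killer p) = 'C(n, p)%:R - 'C(n, p)%:R *+ n ^ e.
Proof. by rewrite raddfB /= nvalue_iterT nvalueXn. Qed.

Lemma nvalue_killer_coprime n p : ~~ (l %| n)%N -> nvalue n (killer p) = 0.
Proof.
move=> nln; rewrite nvalue_killer.
by rewrite (mulrn_modn charL _ (expn_totientM_mod nln)) mulr1n subrr.
Qed.

Lemma coef_killer_lt p i : (i < p)%N -> (killer p)`_i = 0.
Proof.
apply: coef_eq0_below => n lt_np; right.
by rewrite nvalue_killer bin_small // mul0rn subrr.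
Qed.

Lemma coef_killer_id p : (l %| p)%N -> (killer p)`_p = 1.
Proof.
move=> lp; rewrite -(nvalue_coef (@coef_killer_lt p)) nvalue_killer binn.
by rewrite (mulrn_dvdn0 charL _ (dvdn_expn_totientM lp)) subr0.
Qed.

Lemma size_killer b p :
  b%:R = 0 :> R -> (p < b)%N -> (size (killer p) <= b)%N.
Proof.
move=> charb lt_pb; have size_Xp : (size ('X^p : {poly R}) <= b)%N.
  by rewrite size_polyXn.
rewrite (leq_trans (size_polyD _ _)) // geq_max size_Xp size_polyN.
by elim: e => [|k IH] //=; apply: size_Tmap_leq.
Qed.

Lemma exists_coprime_supported b x : b%:R = 0 :> R -> (size x <= b)%N ->
  exists2 y, coprime_supported l y &
    forall n, ~~ (l %| n)%N -> nvalue n y = nvalue n x.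
Proof.
move=> charb le_xb.
have reduce i : (i <= b)%N -> exists y : {poly R}, [/\ (size y <= b)%N,
    forall n, ~~ (l %| n)%N -> nvalue n y = nvalue n x &
    forall j, (j < i)%N -> (l %| j)%N -> y`_j = 0].
  elim: i => [_|i IH lt_ib]; first by exists x.
  have [y [le_yb yx y0]] := IH (ltnW lt_ib).
  have [li|nli] := boolP (l %| i)%N; last first.
    exists y; split=> // j; rewrite ltnS leq_eqVlt => /predU1P [->|]; last exact: y0.
    by rewrite (negPf nli).
  exists (y - y`_i *: killer i); split.
  - rewrite (leq_trans (size_polyD _ _)) // geq_max le_yb size_polyN.
    exact: leq_trans (size_scale_leq _ _) (size_killer charb lt_ib).
  - by move=> n nln; rewrite raddfB /= nvalueZ nvalue_killer_coprime // mulr0 subr0 yx.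
  - move=> j; rewrite ltnS leq_eqVlt coefB coefZ => /predU1P [->|lt_ji lj].
      by rewrite coef_killer_id // mulr1 subrr.
    by rewrite coef_killer_lt // y0 // mulr0 subrr.
have [y [le_yb yx y0]] := reduce b (leqnn b).
exists y => // n ln; have [lt_nb|le_bn] := ltnP n b; first exact: y0.
exact: nth_default (leq_trans le_yb le_bn).
Qed.

Lemma iterT_coprime_supported_surj m x : exists2 y, coprime_supported l y &
  iter (m + nu) (@Tmap R) y = iter nu (@Tmap R) x.
Proof.
have e_gt0 : (0 < e)%N by rewrite muln_gt0 totient_gt0 prime_power_gt0.
set w := iter (e.-1 * m) (@Tmap R) x.
have charb : (L * size w)%:R = 0 :> R by rewrite natrM charL mul0r.
have [y supp_y yw] := exists_coprime_supported charb (leq_pmull _ prime_power_gt0).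
exists y => //; apply: nvalue_inj => n; rewrite !nvalue_iterT.
have [ln|nln] := boolP (l %| n)%N.
  have dvd_L_nu : (L %| n ^ nu)%N := dvdn_exp2r nu ln.
  by rewrite !(mulrn_dvdn0 charL) // expnD dvdn_mull.
rewrite yw // /w nvalue_iterT -mulrnA; apply: (mulrn_modn charL).
rewrite -expnD addnA -mulSnr prednK // expnD expnM -modnMml -modnXm expn_totientM_mod //.
by rewrite modnXm exp1n modnMml mul1n.
Qed.

Lemma Hincl_coprime_supported_inj x y :
  coprime_supported l x -> coprime_supported l y ->
  Hequiv (Hincl x) (Hincl y) -> x = y.
Proof.
move=> supp_x supp_y [k [_ _]]; rewrite /= subn0.
exact: iterT_coprime_supported_inj.
Qed.

Lemma Hincl_coprime_supported_surj (h : Hrep R) :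
  exists2 y, coprime_supported l y & Hequiv (Hincl y) h.
Proof.
case: h => m x; have [y supp_y yx] := iterT_coprime_supported_surj m x.
by exists y => //; exists (m + nu)%N; rewrite /= leq_addr subn0 addKn.
Qed.

End PrimePower.

Section PhiSum.
Variables (R : nzRingType) (l : nat).
Implicit Type d : DL R l.

Definition phi_sum_poly d : {poly R} :=
  \sum_(k < size d) \sum_(j < l.-1) (d`_k) 0 j *: alpha R (k * l + j.+1).

Lemma phi_sumE d : phi_sum d = Hincl (phi_sum_poly d).
Proof. by []. Qed.

Lemma phi_sum_poly_widen d K : (size d <= K)%N ->
  phi_sum_poly d = \sum_(k < K) \sum_(j < l.-1) (d`_k) 0 j *: alpha R (k * l + j.+1).
Proof.
move=> le_dK; symmetry.
pose F k := \sum_(j < l.-1) (d`_k) 0 j *: alpha R (k * l + j.+1).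
apply: (sumr_ord_shrink (F := F)) le_dK _ => k le_dk.
by rewrite /F nth_default // big1 // => j _; rewrite mxE scale0r.
Qed.

Lemma phi_sum_polyD d d' :
  phi_sum_poly (DL_add d d') = phi_sum_poly d + phi_sum_poly d'.
Proof.
rewrite [LHS]/phi_sum_poly size_mkseq (phi_sum_poly_widen (leq_maxl _ (size d'))).
rewrite (phi_sum_poly_widen (leq_maxr (size d) _)) -big_split; apply: eq_bigr => k _.
rewrite nth_mkseq // -big_split; apply: eq_bigr => j _.
by rewrite mxE scalerDl.
Qed.

Lemma phi_sum_polyZ r d : phi_sum_poly (DL_scale r d) = r *: phi_sum_poly d.
Proof.
rewrite /phi_sum_poly size_map scaler_sumr; apply: eq_bigr => k _.
rewrite scaler_sumr (nth_map 0) //; apply: eq_bigr => j _.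
by rewrite mxE scalerA.
Qed.

Lemma ord_predS_lt (j : 'I_l.-1) : (j.+1 < l)%N.
Proof. by rewrite -ltn_predRL. Qed.

Lemma phi_index_eq k k' (j j' : 'I_l.-1) :
  (k' * l + j'.+1 == k * l + j.+1)%N = (k' == k) && (j' == j).
Proof.
have ltj := ord_predS_lt j; have ltj' := ord_predS_lt j'.
have l_gt0 : (0 < l)%N := leq_ltn_trans (leq0n _) ltj.
apply/eqP/andP => [kj|[/eqP -> /eqP ->]] //.
have := congr1 (modn^~ l) kj; have := congr1 (divn^~ l) kj.
rewrite /= !modnMDl !divnMDl // !modn_small // !divn_small // !addn0.
by move=> -> [/val_inj ->].
Qed.

Lemma coef_phi_sum_poly d k (j : 'I_l.-1) :
  (phi_sum_poly d)`_(k * l + j.+1) = (d`_k) 0 j.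
Proof.
rewrite (phi_sum_poly_widen (leq_maxl (size d) k.+1)) coef_sum.
rewrite (bigD1 (Ordinal (leq_maxr (size d) k.+1))) //= coef_sum (bigD1 j) //=.
rewrite coefZ /alpha coefXn eqxx mulr1 big1 => [|j' j'j]; last first.
  by rewrite coefZ coefXn phi_index_eq eqxx eq_sym (negPf j'j) mulr0.
rewrite addr0 big1 ?addr0 // => k'; rewrite -val_eqE eq_sym => /negPf k'k.
rewrite coef_sum big1 // => j' _.
by rewrite coefZ coefXn phi_index_eq /= k'k mulr0.
Qed.

Lemma phi_sum_poly_supported d : coprime_supported l (phi_sum_poly d).
Proof.
move=> n ln; rewrite coef_sum big1 // => k _; rewrite coef_sum big1 // => j _.
rewrite coefZ /alpha coefXn; case: eqP => [nE|]; last by rewrite mulr0.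
by move: ln; rewrite /dvdn nE modnMDl modn_small // ord_predS_lt.
Qed.

Definition phi_sum_inv (y : {poly R}) : DL R l :=
  mkseq (fun k => \row_(j < l.-1) y`_(k * l + j.+1)) (size y).

Lemma phi_sum_invK y : (0 < l)%N -> coprime_supported l y ->
  phi_sum_poly (phi_sum_inv y) = y.
Proof.
move=> l_gt0 supp_y; apply/polyP => n.
have [ln|nln] := boolP (l %| n)%N; first by rewrite phi_sum_poly_supported ?supp_y.
have r_gt0 : (0 < n %% l)%N by rewrite lt0n.
have lt_rl : ((n %% l).-1 < l.-1)%N by rewrite -ltnS !prednK // ltn_pmod.
have nE : n = (n %/ l * l + (Ordinal lt_rl).+1)%N by rewrite /= prednK // -divn_eq.
rewrite [in LHS]nE coef_phi_sum_poly /phi_sum_inv.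
have [lt_qy|le_yq] := ltnP (n %/ l) (size y); first by rewrite nth_mkseq // mxE -nE.
rewrite nth_default ?size_mkseq // mxE nth_default //.
by apply: leq_trans le_yq _; rewrite leq_div.
Qed.

End PhiSum.

Lemma sum_coef_alpha (R : nzRingType) (c : {poly R}) :
  \sum_(n < size c) c`_n *: alpha R n = c.
Proof. by rewrite /alpha -poly_def coefK. Qed.

Theorem theorem2p5 (l nu : nat) (R : nzRingType) :
  prime l -> (0 < nu)%N -> (l ^ nu)%:R = 0 :> R ->
  [/\ (forall d d' : DL R l,
         Hequiv (phi_sum (DL_add d d')) (Hadd (phi_sum d) (phi_sum d'))),
      (forall (r : R) (d : DL R l),
         Hequiv (phi_sum (DL_scale r d)) (Hscale r (phi_sum d))),
      (forall d d' : DL R l, Hequiv (phi_sum d) (phi_sum d') -> DL_eq d d'),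
      (forall h : Hrep R, exists d : DL R l, Hequiv (phi_sum d) h)
  & (forall h : Hrep R, exists c : {poly R},
        (forall n, (n == 0)%N || (l %| n)%N -> c`_n = 0) /\
        Hequiv (Hincl (\sum_(n < size c) c`_n *: alpha R n)) h) /\
    (forall c : {poly R},
        (forall n, (n == 0)%N || (l %| n)%N -> c`_n = 0) ->
        Hequiv (Hincl (\sum_(n < size c) c`_n *: alpha R n)) (Hincl 0) ->
        forall n, c`_n = 0)].
Proof.
move=> l_prime nu_gt0 charL.
have supported_0 (c : {poly R}) :
    coprime_supported l c -> forall n, (n == 0)%N || (l %| n)%N -> c`_n = 0.
  by move=> supp_c n /predU1P [->|]; apply: supp_c; rewrite ?dvdn0.
split.
- by move=> d d'; exists 0%N; rewrite !phi_sumE /= phi_sum_polyD.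
- by move=> r d; exists 0%N; rewrite !phi_sumE /= phi_sum_polyZ.
- move=> d d'; rewrite !phi_sumE.
  move/(Hincl_coprime_supported_inj l_prime nu_gt0 charL).
  move/(_ (phi_sum_poly_supported d) (phi_sum_poly_supported d')) => dd' k.
  by apply/rowP => j; rewrite -!coef_phi_sum_poly dd'.
- move=> h; have [y supp_y yh] := Hincl_coprime_supported_surj l_prime nu_gt0 charL h.
  by exists (phi_sum_inv l y); rewrite phi_sumE phi_sum_invK // prime_gt0.
split.
- move=> h; have [y supp_y yh] := Hincl_coprime_supported_surj l_prime nu_gt0 charL h.
  by exists y; rewrite sum_coef_alpha; split=> //; apply: supported_0.
move=> c c0; rewrite sum_coef_alpha.
have supp_c : coprime_supported l c by move=> n ln; apply: c0; rewrite ln orbT.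
have supp_0 : coprime_supported l (0 : {poly R}) by move=> n _; rewrite coef0.
move/(Hincl_coprime_supported_inj l_prime nu_gt0 charL supp_c supp_0) => -> n.
exact: coef0.
Qed.
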